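(* Let $A=\mathbb{C}[x,y,z]$, let $s,t\in A\setminus\{0\}$ be coprime and equip $A$ with the Poisson bracket $\{x,y\}=t s_z-s t_z$, $\{y,z\}=t s_x-s t_x$, $\{z,x\}=t s_y-s t_y$. Let $(\lambda,\mu)\in\mathbb{P}^1(\mathbb{C})$ be such that $f_{\lambda,\mu}:=\lambda s-\mu t$ is a non-zero non-unit and let $u$ be an irreducible factor of $f_{\lambda,\mu}$ in $A$. Then $f_{\lambda,\mu}A$ is a Poisson ideal and $uA$ is a Poisson prime ideal of $A$.
   Context: Subscripts denote partial derivatives. A Poisson ideal is an ideal $I$ with $\{a,I\}\subseteq I$ for all $a\in A$; a Poisson prime ideal is a Poisson ideal that is prime. *)

From mathcomp Require Import all_boot all_algebra.
From mathcomp Require Import Rstruct.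
From mathcomp Require Import complex.
From mathcomp Require Export mpoly.
Set Implicit Arguments. Unset Strict Implicit. Unset Printing Implicit Defensive.
Import GRing.Theory.
Local Open Scope ring_scope.

Definition C : rcfType := Rdefinitions.R.
Notation CC := (complex C).

Section Defs.
Variable K : idomainType.
Notation A := {mpoly K[3]}.

Definition ix : 'I_3 := @Ordinal 3 0 isT.
Definition iy : 'I_3 := @Ordinal 3 1 isT.
Definition iz : 'I_3 := @Ordinal 3 2 isT.

Definition dx (p : A) : A := p^`M(ix).
Definition dy (p : A) : A := p^`M(iy).
Definition dz (p : A) : A := p^`M(iz).

Definition mdvd (d p : A) : Prop := exists q : A, p = d * q.

Definition mcoprime (s t : A) : Prop :=
  forall d : A, mdvd d s -> mdvd d t -> d \is a GRing.unit.

Definition mirreducible (u : A) : Prop :=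
  [/\ u != 0, u \isn't a GRing.unit &
      forall a b : A, u = a * b -> a \is a GRing.unit \/ b \is a GRing.unit].

(* The Poisson bracket determined by s, t:
   {x,y} = t s_z - s t_z, {y,z} = t s_x - s t_x, {z,x} = t s_y - s t_y,
   extended as the (unique) biderivation:
   {f,g} = sum_{i,j} f_i g_j {x_i,x_j}. *)
Definition pbr (s t f g : A) : A :=
  (dx f * dy g - dy f * dx g) * (t * dz s - s * dz t)
  + (dy f * dz g - dz f * dy g) * (t * dx s - s * dx t)
  + (dz f * dx g - dx f * dz g) * (t * dy s - s * dy t).

Definition pideal (a : A) : A -> Prop := fun p => mdvd a p.

Definition is_ideal (I : A -> Prop) : Prop :=
  [/\ I 0, (forall p q, I p -> I q -> I (p + q)) & (forall a p, I p -> I (a * p))].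

Definition poisson_ideal (s t : A) (I : A -> Prop) : Prop :=
  is_ideal I /\ (forall a p, I p -> I (pbr s t a p)).

Definition prime_ideal (I : A -> Prop) : Prop :=
  [/\ is_ideal I, ~ I 1 & forall a b, I (a * b) -> I a \/ I b].

Definition poisson_prime_ideal (s t : A) (I : A -> Prop) : Prop :=
  poisson_ideal s t I /\ prime_ideal I.

End Defs.

(** The bracket is [{a, g} = det (grad a, grad g, W s t)] with [W s t = t grad s - s grad t].
    Since [W] is bilinear and alternating, replacing [s] (or [t]) by [f = lam s - mu t]
    only rescales the bracket by [lam] (or [-mu]), one of which is non-zero. If [u h = f]
    then [W (u h) t = t h grad u + u W h t], and [det (grad a, grad u, grad u) = 0], so [u]
    divides [{a, u}]; by the Leibniz rule [uA] is then a Poisson ideal (taking [u = f] gives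
    the first claim). Primality of [uA] is the fact that irreducible polynomials over a
    field are prime, proved by induction on the number of variables with Gauss's lemma,
    through [K[x_0..x_n] ~= K[x_0..x_(n-1)][X]]. *)

From mathcomp Require Import all_boot all_algebra.
From mathcomp Require Import complex.
From mathcomp Require Import ring zify.
From Stdlib Require Import Classical.
Import GRing.Theory.
Local Open Scope ring_scope.

Section Divisibility.
Context {R : idomainType}.
Implicit Types a b c p : R.

Definition divides a b : Prop := exists q, b = a * q.

Definition irreducible_elem p : Prop :=
  [/\ p != 0, p \isn't a GRing.unit &
      forall a b, p = a * b -> a \is a GRing.unit \/ b \is a GRing.unit].

Definition prime_elem p : Prop :=
  [/\ p != 0, p \isn't a GRing.unit &
      forall a b, divides p (a * b) -> divides p a \/ divides p b].

Lemma divides0 a : divides a 0.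
Proof. by exists 0; rewrite mulr0. Qed.

Lemma dividesD a b c : divides a b -> divides a c -> divides a (b + c).
Proof. by move=> [x ->] [y ->]; exists (x + y); rewrite mulrDr. Qed.

Lemma dividesB a b c : divides a b -> divides a c -> divides a (b - c).
Proof. by move=> [x ->] [y ->]; exists (x - y); rewrite mulrBr. Qed.

Lemma reducible_split {p} : p != 0 -> p \isn't a GRing.unit -> ~ irreducible_elem p ->
  exists a b, [/\ p = a * b, a \isn't a GRing.unit & b \isn't a GRing.unit].
Proof.
move=> p0 pNU pNirr; apply: NNPP => no_split; apply: pNirr; split => // a b pE.
apply: NNPP => /not_or_and[/negP aNU /negP bNU]; apply: no_split.
by exists a, b.
Qed.

End Divisibility.

Definition irreducibles_prime (R : idomainType) : Prop :=
  forall p : R, irreducible_elem p -> prime_elem p.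

Definition prime_factorizations (R : idomainType) : Prop :=
  forall a : R, a != 0 -> exists e (ps : seq R),
    [/\ e \is a GRing.unit, (forall p, p \in ps -> prime_elem p) &
        a = e * \prod_(p <- ps) p].

Section PrincipalIdeals.
Variable K : idomainType.

Lemma pideal_is_ideal (g : {mpoly K[3]}) : is_ideal (pideal g).
Proof.
split.
- by exists 0; rewrite mulr0.
- by move=> p q [p' ->] [q' ->]; exists (p' + q'); rewrite mulrDr.
- by move=> a p [p' ->]; exists (a * p'); rewrite mulrCA.
Qed.

Lemma prime_ideal_pideal (u : {mpoly K[3]}) : prime_elem u -> prime_ideal (pideal u).
Proof.
case=> _ uNU u_prime; split => //; first exact: pideal_is_ideal.
by case=> q qE; case/negP: uNU; apply/unitrP; exists q; rewrite mulrC -qE.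
Qed.

End PrincipalIdeals.

Section PoissonBracket.
Variable K : fieldType.
Implicit Types (s t a g h u : {mpoly K[3]}) (l m : K).

Let scaleE l (p : {mpoly K[3]}) : l *: p = l%:MP * p.
Proof. by rewrite mul_mpolyC. Qed.

Lemma pbrMr s t a g h : pbr s t a (g * h) = h * pbr s t a g + g * pbr s t a h.
Proof. by rewrite /pbr /dx /dy /dz !mderivM; ring. Qed.

Lemma pbr_pencill s t l m a g : pbr (l *: s - m *: t) t a g = l *: pbr s t a g.
Proof. by rewrite /pbr /dx /dy /dz !mderivB !mderivZ !scaleE; ring. Qed.

Lemma pbr_pencilr s t l m a g : pbr s (l *: s - m *: t) a g = (- m) *: pbr s t a g.
Proof. by rewrite /pbr /dx /dy /dz !mderivB !mderivZ !scaleE; ring. Qed.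

Lemma pbr_factorl t a u h : pbr (u * h) t a u = u * pbr h t a u.
Proof. by rewrite /pbr /dx /dy /dz !mderivM; ring. Qed.

Lemma pbr_factorr s a u h : pbr s (u * h) a u = u * pbr s h a u.
Proof. by rewrite /pbr /dx /dy /dz !mderivM; ring. Qed.

Lemma poisson_pideal s t g :
  (forall a, mdvd g (pbr s t a g)) -> poisson_ideal s t (pideal g).
Proof.
move=> brg; split; first exact: pideal_is_ideal.
move=> a p [q ->]; rewrite pbrMr; have [e ->] := brg a.
by exists (q * e + pbr s t a q); ring.
Qed.

Lemma mdvd_scale {l u p} : l != 0 -> mdvd u (l *: p) -> mdvd u p.
Proof.
move=> l0 [q e]; exists (l^-1 *: q).
by rewrite -scalerAr -e scalerA mulVf // scale1r.
Qed.

Lemma poisson_pideal_pencil_factor s t l m u :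
  (l, m) != (0, 0) -> mdvd u (l *: s - m *: t) -> poisson_ideal s t (pideal u).
Proof.
move=> lm0 [h fE]; apply: poisson_pideal => a.
have [l0|l0] := eqVneq l 0.
  have m0 : - m != 0 by rewrite oppr_eq0; move: lm0; rewrite l0 xpair_eqE eqxx.
  apply: (mdvd_scale m0); rewrite -(pbr_pencilr _ _ l) fE pbr_factorr.
  by exists (pbr s h a u).
apply: (mdvd_scale l0); rewrite -(pbr_pencill _ _ _ m) fE pbr_factorl.
by exists (pbr h t a u).
Qed.

End PoissonBracket.

Lemma size_sub_lead (R : nzRingType) (p : {poly R}) : p != 0 ->
  (size (p - lead_coef p *: 'X^((size p).-1))%R < size p)%N.
Proof.
move=> p0; have sp : (0 < size p)%N by rewrite size_poly_gt0.
rewrite -(prednK sp) ltnS; apply/leq_sizeP => j.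
rewrite leq_eqVlt coefB coefZ coefXn => /orP[/eqP<-|ltj].
  by rewrite eqxx mulr1 subrr.
by rewrite (gtn_eqF ltj) mulr0 subr0 nth_default // -(prednK sp).
Qed.

Section GaussLemma.
Context {R : idomainType}.
Implicit Types (c d : R) (p q r u v w : {poly R}).

Lemma polyC_dvd_coef c p i : divides c%:P p -> divides c p`_i.
Proof. by move=> [q ->]; exists q`_i; rewrite coefCM. Qed.

Lemma polyC_prime {c} : prime_elem c ->
  forall p q, divides c%:P (p * q) -> divides c%:P p \/ divides c%:P q.
Proof.
case=> _ _ c_prime p q; move: {2}(size p + size q)%N (leqnn (size p + size q)) => n.
elim: n p q => [|n IH] p q le_pq pq_c.
  by left; move: le_pq; rewrite leqn0 addn_eq0 size_poly_eq0 => /andP[/eqP-> _]; apply: divides0.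
have [->|p0] := eqVneq p 0; first by left; apply: divides0.
have [->|q0] := eqVneq q 0; first by right; apply: divides0.
wlog [e lpE] : p q p0 q0 le_pq pq_c / divides c (lead_coef p).
  move=> wlog_p; have : divides c (lead_coef p * lead_coef q).
    by rewrite -lead_coefM; apply: polyC_dvd_coef.
  case/c_prime => [|lqc]; first exact: wlog_p.
  by apply/or_comm/wlog_p; rewrite 1?addnC 1?mulrC.
pose p' := p - lead_coef p *: 'X^((size p).-1).
have pE : p = p' + c%:P * (e *: 'X^((size p).-1)).
  by rewrite /p' lpE -scalerA mul_polyC subrK.
have : divides c%:P (p' * q).
  have -> : p' * q = p * q - c%:P * (e *: 'X^((size p).-1) * q) by rewrite {1}pE; ring.
  by apply: dividesB => //; eexists.
case/IH => [||]; last by right.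
- by rewrite -ltnS; apply: leq_trans le_pq; rewrite ltn_add2r size_sub_lead.
- by move=> p'c; left; rewrite pE; apply: dividesD => //; eexists.
Qed.

Lemma polyC_prod_mul_split e (ps : seq R) u v w :
  e \is a GRing.unit -> (forall x, x \in ps -> prime_elem x) ->
  (e * \prod_(x <- ps) x)%:P * u = v * w ->
  exists c1 c2 v' w', [/\ v = c1%:P * v', w = c2%:P * w' & u = v' * w'].
Proof.
move=> eU; elim: ps u v w => [|x ps IH] u v w ps_prime.
  rewrite big_nil mulr1 => uE.
  exists e, 1, (e^-1%:P * v), w; split.
  - by rewrite mulrA -polyCM mulrV // mul1r.
  - by rewrite polyC1 mul1r.
  - by rewrite -mulrA -uE mulrA -polyCM mulVr // mul1r.
have x_prime := ps_prime x (mem_head x ps).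
have {}ps_prime y : y \in ps -> prime_elem y.
  by move=> yps; apply: ps_prime; rewrite in_cons yps orbT.
have x0 : x%:P != 0 by rewrite polyC_eq0; case: x_prime.
rewrite big_cons mulrCA polyCM -mulrA => uE.
have x_vw : divides x%:P (v * w) by rewrite -uE; eexists.
wlog [v1 vE] : v w uE x_vw / divides x%:P v.
  move=> wlog_v; case/(polyC_prime x_prime): (x_vw) => [|pw]; first exact: wlog_v.
  have := wlog_v w v; rewrite [w * v]mulrC => /(_ uE x_vw pw)[c1 [c2 [v' [w' [vE wE uE']]]]].
  by exists c2, c1, w', v'; split; rewrite // uE' mulrC.
have [|c1 [c2 [v' [w' [v1E wE uE']]]]] := IH u v1 w ps_prime.
  by apply: (mulfI x0); rewrite uE vE mulrA.
by exists (x * c1), c2, v', w'; rewrite vE v1E polyCM mulrA.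
Qed.

Hypothesis R_factorizations : prime_factorizations R.

Lemma polyC_mul_split {c u v w} : c != 0 -> c%:P * u = v * w ->
  exists c1 c2 v' w', [/\ v = c1%:P * v', w = c2%:P * w' & u = v' * w'].
Proof.
by move=> /R_factorizations[e [ps [eU ps_prime ->]]]; apply: polyC_prod_mul_split.
Qed.

Lemma irreducible_dvd_polyC_mul {u c p} w : irreducible_elem u -> (1 < size u)%N ->
  c != 0 -> c%:P * p = u * w -> divides u p.
Proof.
move=> [u0 _ u_irr] su c0 /(polyC_mul_split c0)[c1 [c2 [v' [w' [uE _ pE]]]]].
have [c1U|] := u_irr _ _ uE.
  by exists (c1%:P^-1 * w'); rewrite pE uE [c1%:P * v']mulrC -mulrA mulVKr.
have c10 : c1 != 0 by apply: contraNneq u0; rewrite uE => ->; rewrite mul0r.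
by rewrite poly_unitE => /andP[/eqP sv' _]; move: su; rewrite uE mul_polyC size_scale // sv'.
Qed.

Lemma irreducible_dvd_common_factor {u a} r : irreducible_elem u -> (1 < size u)%N ->
  (1 < size r)%N -> r %| u -> r %| a -> divides u a.
Proof.
move=> iu su sr /Pdiv.Idomain.divpK ruE /Pdiv.Idomain.divpK raE.
have lr0 : lead_coef r != 0 by rewrite lead_coef_eq0 -size_poly_gt0 ltnW.
have [u0 _ u_irr] := iu.
move: ruE; rewrite -mul_polyC => /esym /(polyC_mul_split (expf_neq0 _ lr0)).
move=> [c1 [c2 [v' [w' [_ rE uE]]]]].
have [v'U|] := u_irr _ _ uE; last first.
  have c20 : c2 != 0 by apply: contra_ltnN sr; rewrite rE => /eqP->; rewrite mul0r size_poly0.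
  by rewrite poly_unitE => /andP[/eqP sw' _]; move: sr; rewrite rE mul_polyC size_scale // sw'.
apply: (irreducible_dvd_polyC_mul (a %/ r * c2%:P * v'^-1) iu su (expf_neq0 (scalp a r) lr0)).
by rewrite mul_polyC -raE rE uE -[LHS]mul1r -(mulrV v'U); ring.
Qed.

(* Euclid's algorithm by pseudo-division inside the ideal (u, a): a non-constant
   element of minimal size would pseudo-divide both u and a. *)
Lemma irreducible_Bezout_const {u a} : irreducible_elem u -> (1 < size u)%N ->
  ~ divides u a -> exists2 d, d != 0 & exists al be, d%:P = al * u + be * a.
Proof.
move=> iu su nua.
pose comb p := exists al be, p = al * u + be * a.
suff : forall n r, (size r <= n)%N -> r != 0 -> comb r ->
    exists2 d, d != 0 & comb d%:P.
  by move/(_ _ u (leqnn _)); apply; [case: iu | exists 1, 0; rewrite mul1r mul0r addr0].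
elim=> [|n IH] r sr r0 [al [be rE]].
  by move: r0; rewrite -size_poly_eq0 -leqn0 sr.
have [sr1|sr1] := leqP (size r) 1.
  exists r`_0; last by exists al, be; rewrite -size1_polyC.
  by apply: contraNneq r0 => r00; rewrite (size1_polyC sr1) r00.
have comb_mod p : comb p -> comb (p %% r).
  move=> [al' [be' pE]]; have := Pdiv.Idomain.divp_eq p r; rewrite -mul_polyC.
  set k := _%:P; set q := p %/ r => pdiv.
  exists (k * al' - q * al), (k * be' - q * be).
  by apply: (addrI (q * r)); rewrite -pdiv pE rE; ring.
have mod_step p : comb p -> p %% r != 0 -> exists2 d, d != 0 & comb d%:P.
  move=> combp pr0; apply: (IH (p %% r)) => //; last exact: comb_mod.
  by rewrite -ltnS; apply: leq_trans sr; rewrite Pdiv.Idomain.ltn_modp.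
have [ur0|] := eqVneq (u %% r) 0; last by apply: mod_step; exists 1, 0; rewrite mul1r mul0r addr0.
have [ar0|] := eqVneq (a %% r) 0; last by apply: mod_step; exists 0, 1; rewrite mul1r mul0r add0r.
by case: nua; apply: (irreducible_dvd_common_factor r iu su sr1); rewrite /Pdiv.Idomain.dvdp ?ur0 ?ar0.
Qed.

Hypothesis R_irreducibles_prime : irreducibles_prime R.

Lemma polyC_irreducible {c} : irreducible_elem c%:P -> irreducible_elem c.
Proof.
have polyC_unit d : (d%:P \is a GRing.unit) = (d \is a GRing.unit).
  by rewrite poly_unitE size_polyC coefC /=; have [->|] := eqVneq d 0; rewrite ?unitr0.
case=> c0 cU c_irr; split; first by rewrite -polyC_eq0.
  by rewrite -polyC_unit.
by move=> a b cE; rewrite -!polyC_unit; apply: c_irr; rewrite cE polyCM.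
Qed.

Lemma poly_irreducibles_prime : irreducibles_prime {poly R}.
Proof.
move=> u iu; have [u0 uU _] := iu; split => // a b [q abE].
have [su|su] := leqP (size u) 1.
  rewrite (size1_polyC su) in iu abE *.
  by apply: (polyC_prime (R_irreducibles_prime _ (polyC_irreducible iu))); exists q.
have [|nua] := classic (divides u a); first by left.
right; have [d d0 [al [be dE]]] := irreducible_Bezout_const iu su nua.
apply: (irreducible_dvd_polyC_mul (al * b + be * q) iu su d0).
by rewrite dE mulrDl -[be * a * b]mulrA abE; ring.
Qed.

End GaussLemma.

Lemma irreducibles_prime_can (R S : idomainType) (f : {rmorphism R -> S}) (g : S -> R) :
  cancel f g -> cancel g f -> irreducibles_prime S -> irreducibles_prime R.
Proof.
move=> fK gK S_ip u [u0 uNU u_irr]; have f_inj := can_inj fK.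
have gM x y : g (x * y) = g x * g y by apply: f_inj; rewrite rmorphM !gK.
have [_ _ fu_prime] : prime_elem (f u).
  apply: S_ip; split.
  - by rewrite -(rmorph0 f) (inj_eq f_inj).
  - apply: contra uNU => /unitrP[y [yfu fuy]]; apply/unitrP; exists (g y).
    by rewrite -(fK u) -!gM yfu fuy -(rmorph1 f) fK.
  - move=> a b fuE; have := u_irr (g a) (g b); rewrite -gM -fuE fK.
    by case=> // /(rmorph_unit f); rewrite gK; [left | right].
split => // a b [q abE].
have : divides (f u) (f a * f b) by exists (f q); rewrite -!rmorphM abE.
by case/fu_prime=> [[q' aE] | [q' bE]]; [left | right]; exists (g q');
  apply: f_inj; rewrite rmorphM gK.
Qed.

Lemma mpoly_rmorph_eq {R : comNzRingType} {k : nat} {T : comNzRingType}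
    (F G : {rmorphism {mpoly R[k]} -> T}) :
  (forall c, F c%:MP = G c%:MP) -> (forall i, F 'X_i = G 'X_i) -> F =1 G.
Proof.
move=> FGC FGX p; rewrite (mpolyE p) !rmorph_sum; apply: eq_bigr => m _.
rewrite -mul_mpolyC !rmorphM FGC mpolyXE_id !rmorph_prod; congr (_ * _).
by apply: eq_bigr => i _; rewrite !rmorphXn FGX.
Qed.

Section MPolyUnivariate.
Variables (n : nat) (R : comNzRingType).
Local Notation widen_n := (widen_ord (leqnSn n)).

Lemma muniX (i : 'I_n.+1) : muni ('X_i : {mpoly R[n.+1]}) =
  if split (cast_ord (esym (addn1 n)) i) is inl j then ('X_j)%:P else 'X.
Proof. by rewrite /muni mmapX mmap1U. Qed.

Lemma muniX_max : muni ('X_ord_max : {mpoly R[n.+1]}) = 'X.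
Proof.
rewrite muniX; case: splitP => // j /= jE.
by have := ltn_ord j; rewrite -jE ltnn.
Qed.

Lemma muniX_widen (j : 'I_n) : muni ('X_(widen_n j) : {mpoly R[n.+1]}) = ('X_j)%:P.
Proof.
rewrite muniX; case: splitP => [k /= kE|k /= kE].
  by congr ('X__)%:P; apply: val_inj.
by have := ltn_ord j; rewrite kE ord1 addn0 ltnn.
Qed.

Lemma mmultiE (q : {poly {mpoly R[n]}}) :
  mmulti q = (map_poly (@mwiden n R) q).['X_ord_max].
Proof.
rewrite horner_coef size_map_inj_poly ?mwiden0 //; last exact: inj_mwiden.
by apply: eq_bigr => i _; rewrite coef_map.
Qed.

Lemma muni_mwiden (p : {mpoly R[n]}) : muni (mwiden p) = p%:P.
Proof.
suff /(_ p) : @muni n R \o @mwiden n R =1 polyC by [].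
apply: mpoly_rmorph_eq => [c|i] /=; first by rewrite mwidenC muniC.
by rewrite mwidenX mnmwiden1 muniX_widen.
Qed.

Lemma muniK : cancel (@muni n R) (@mmulti n R).
Proof.
move=> p; rewrite mmultiE.
suff /(_ p) : horner_eval 'X_ord_max \o map_poly (@mwiden n R) \o @muni n R =1 idfun by [].
apply: mpoly_rmorph_eq => [c|i] /=; first by rewrite horner_evalE muniC map_polyC hornerC /= mwidenC.
have [->|ne] := eqVneq i ord_max; first by rewrite horner_evalE muniX_max map_polyX hornerX.
have ilt : (i < n)%N.
  by rewrite ltn_neqAle -ltnS ltn_ord andbT; apply: contra ne => /eqP iE; apply/eqP/ord_inj.
have -> : i = widen_n (Ordinal ilt) by apply: val_inj.
by rewrite horner_evalE muniX_widen map_polyC hornerC /= mwidenX mnmwiden1.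
Qed.

Lemma mmultiK : cancel (@mmulti n R) (@muni n R).
Proof.
move=> q; rewrite /mmulti rmorph_sum -[RHS]coefK poly_def; apply: eq_bigr => i _.
by rewrite rmorphM rmorphXn /= muni_mwiden muniX_max mul_polyC.
Qed.

End MPolyUnivariate.

Section MPolyFactorial.
Variable K : fieldType.

Lemma mpoly_unit_msize n (p : {mpoly K[n]}) :
  (p \is a GRing.unit) = (msize p == 1%N).
Proof.
have -> : (p \is a GRing.unit) = (p == (p@_0)%:MP) && (p@_0 \is a GRing.unit) by [].
apply/andP/eqP => [[/eqP pE p0U]|sp1].
  by rewrite pE msizeC -unitfE p0U.
have pE := msize1_polyC (eq_leq sp1); split; first by rewrite -pE.
by rewrite unitfE; apply/eqP => p00; move: sp1; rewrite pE p00 msizeC eqxx.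
Qed.

Lemma mpoly_prime_factorizations {n} :
  irreducibles_prime {mpoly K[n]} -> prime_factorizations {mpoly K[n]}.
Proof.
move=> ip d; move: {2}(msize d) (leqnn (msize d)) => k.
elim: k d => [|k IH] d sd d0.
  by move: d0; rewrite -msize_poly_eq0 -leqn0 sd.
have [dU|dNU] := boolP (d \is a GRing.unit).
  by exists d, [::]; rewrite big_nil mulr1.
have [d_irr|/(reducible_split d0 dNU)[a [b [dE aNU bNU]]]] := classic (irreducible_elem d).
  exists 1, [:: d]; split; [exact: unitr1 | | by rewrite big_seq1 mul1r].
  by move=> x; rewrite mem_seq1 => /eqP->; apply: ip.
have a0 : a != 0 by apply: contraNneq d0; rewrite dE => ->; rewrite mul0r.
have b0 : b != 0 by apply: contraNneq d0; rewrite dE => ->; rewrite mulr0.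
have sa : (1 < msize a)%N.
  by move: aNU a0; rewrite mpoly_unit_msize -msize_poly_eq0; case: (msize a) => [|[]].
have sb : (1 < msize b)%N.
  by move: bNU b0; rewrite mpoly_unit_msize -msize_poly_eq0; case: (msize b) => [|[]].
have sab : msize d = (msize a + msize b).-1 by rewrite dE msizeM.
have [{}sa {}sb] : (msize a <= k)%N /\ (msize b <= k)%N.
  by move: sd sa sb; rewrite sab; lia.
have [ea [psa [eaU psa_prime aE]]] := IH a sa a0.
have [eb [psb [ebU psb_prime bE]]] := IH b sb b0.
exists (ea * eb), (psa ++ psb); split.
- by rewrite unitrM eaU ebU.
- by move=> x; rewrite mem_cat => /orP[]; [apply: psa_prime | apply: psb_prime].
- by rewrite dE aE bE big_cat /=; ring.
Qed.

Lemma mpoly_irreducibles_prime n : irreducibles_prime {mpoly K[n]}.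
Proof.
elim: n => [|n IH].
  move=> p [p0 pNU _]; case/negP: pNU; rewrite mpoly_unit_msize.
  by move: p0; rewrite (nvar0_mpolyC p) msizeC mpolyC_eq0 => ->.
apply: (@irreducibles_prime_can _ _ (@muni n K) (@mmulti n K) (@muniK n K) (@mmultiK n K)).
exact: (poly_irreducibles_prime (mpoly_prime_factorizations IH) IH).
Qed.

End MPolyFactorial.

Theorem lemma3p4 (s t : {mpoly CC[3]}) (lam mu : CC) (u : {mpoly CC[3]}) :
  s != 0 -> t != 0 -> mcoprime s t ->
  (lam, mu) != (0, 0) ->
  lam *: s - mu *: t != 0 ->
  lam *: s - mu *: t \isn't a GRing.unit ->
  mirreducible u -> mdvd u (lam *: s - mu *: t) ->
  poisson_ideal s t (pideal (lam *: s - mu *: t)) /\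
  poisson_prime_ideal s t (pideal u).
Proof.
move=> _ _ _ lm0 _ _ u_irr u_f.
have f_f : mdvd (lam *: s - mu *: t) (lam *: s - mu *: t) by exists 1; rewrite mulr1.
split; first exact: poisson_pideal_pencil_factor lm0 f_f.
split; first exact: poisson_pideal_pencil_factor lm0 u_f.
exact/prime_ideal_pideal/mpoly_irreducibles_prime.
Qed.
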